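(* (1) With $\mathbf a=v\mathbf c$, the function $$\tilde G(\mathbf a,v)=\sum_{k=1}^N\Big(a_k\big(\ln\tfrac{a_k}{v c_k^{\rm e}}-1+q_k\big)+vc_k^{\rm e}\Big)+A\Big(\ln\tfrac{A}{v}-1\Big),\qquad (\mathbf a,v)\in[0,\infty)^N\times(0,\infty)$$ (with $0\ln 0=0$) has positive definite Hessian at every point of $(0,\infty)^{N+1}$, and is convex. (2) Suppose $f(\phi_{\min})<0$ and let $(\mathbf c^*,v^*,\phi^* )$ be the unique steady state of the linear pump-leak system. Then $(\mathbf c^*,v^* )$ is the unique minimizer of $\tilde G(\mathbf c,v)=v\sum_k\big(c_k(\ln(c_k/c_k^{\rm e})-1+q_k)+c_k^{\rm e}\big)+A(\ln(A/v)-1)$ over the set $\overline{\mathcal S}=\{(\mathbf c,v)\in[0,\infty)^N\times(0,\infty):\sum_kz_kc_k+zA/v=0\}$.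
   Context: Fix an integer $N\ge2$, real valences $z_1,\dots,z_N$ not all zero, positive constants $c_k^{\rm e}$ with $\sum_kz_kc_k^{\rm e}=0$, $A>0$, $z\in\mathbb R$. Let $L$ be a real symmetric positive definite $N\times N$ matrix, $\mathbf p\in\mathbb R^N$ constant, $\zeta>0$, $\mathbf q=(q_k)=L^{-1}\mathbf p$, and $f(\phi)=\sum_kc_k^{\rm e}(\exp(-q_k-z_k\phi)-1)$, which has a unique minimizer $\phi_{\min}$ on $\mathbb R$. For $\mathbf c\in(0,\infty)^N$, $v>0$, $\phi\in\mathbb R$: $\mu_k=\ln(c_k/c_k^{\rm e})+z_k\phi$, $\pi_{\rm w}=\sum_kc_k^{\rm e}-(\sum_kc_k+A/v)$. The linear pump-leak system is $\frac{d}{dt}(v\mathbf c)=-L\boldsymbol\mu-\mathbf p$, $0=\sum_kz_kc_k+zA/v$, $\frac{dv}{dt}=-\zeta\pi_{\rm w}$; a steady state is a point $(\mathbf c,v,\phi)\in(0,\infty)^N\times(0,\infty)\times\mathbb R$ with the constraint holding, $L\boldsymbol\mu+\mathbf p=0$ and $\pi_{\rm w}=0$; when $f(\phi_{\min})<0$ it exists and is unique. *)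

(* classical reals. Vectors in R^N are functions nat -> R,
   only the entries 0..N-1 being relevant. *)
From Stdlib Require Import Reals Lra Lia.
Open Scope R_scope.

Fixpoint rsum (n : nat) (f : nat -> R) : R :=
  match n with O => 0 | S m => rsum m f + f m end.

(* Gtilde as a function of (a, v), a = v c.  Note a * ln(...) = 0 when a = 0,
   which implements the convention 0 ln 0 = 0. *)
Definition Gt_av (N : nat) (ce q : nat -> R) (A : R) (a : nat -> R) (v : R) : R :=
  rsum N (fun k => a k * (ln (a k / (v * ce k)) - 1 + q k) + v * ce k)
  + A * (ln (A / v) - 1).

Definition Gt_cv (N : nat) (ce q : nat -> R) (A : R) (c : nat -> R) (v : R) : R :=
  v * rsum N (fun k => c k * (ln (c k / ce k) - 1 + q k) + ce k)
  + A * (ln (A / v) - 1).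

(* A point of R^(N+1) is x : nat -> R; coordinates 0..N-1 are a, coordinate N is v. *)
Definition Gt_pt (N : nat) (ce q : nat -> R) (A : R) (x : nat -> R) : R :=
  Gt_av N ce q A x (x N).

Definition unitv (i : nat) : nat -> R := fun k => if Nat.eq_dec k i then 1 else 0.
Definition shift (x : nat -> R) (t : R) (i : nat) : nat -> R :=
  fun k => x k + t * unitv i k.

Definition in_open (n : nat) (x : nat -> R) : Prop := forall k, (k < n)%nat -> 0 < x k.

Definition is_hessian (n : nat) (F : (nat -> R) -> R) (x : nat -> R)
    (H : nat -> nat -> R) : Prop :=
  exists D : (nat -> R) -> nat -> R,
    (forall y, in_open n y -> forall j, (j < n)%nat ->
        derivable_pt_lim (fun t => F (shift y t j)) 0 (D y j)) /\
    (forall i j, (i < n)%nat -> (j < n)%nat ->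
        derivable_pt_lim (fun t => D (shift x t i) j) 0 (H i j)).

Definition pos_def (n : nat) (H : nat -> nat -> R) : Prop :=
  forall h : nat -> R, (exists k, (k < n)%nat /\ h k <> 0) ->
    0 < rsum n (fun i => h i * rsum n (fun j => H i j * h j)).

Definition in_dom (N : nat) (x : nat -> R) : Prop :=
  (forall k, (k < N)%nat -> 0 <= x k) /\ 0 < x N.

Definition convex_on_dom (N : nat) (F : (nat -> R) -> R) : Prop :=
  forall x y t, in_dom N x -> in_dom N y -> 0 <= t <= 1 ->
    F (fun k => t * x k + (1 - t) * y k) <= t * F x + (1 - t) * F y.

Definition mu (ce : nat -> R) (z : nat -> R) (c : nat -> R) (phi : R) : nat -> R :=
  fun k => ln (c k / ce k) + z k * phi.

Definition piw (N : nat) (ce c : nat -> R) (A v : R) : R :=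
  rsum N ce - (rsum N c + A / v).

Definition fphi (N : nat) (ce z q : nat -> R) (phi : R) : R :=
  rsum N (fun k => ce k * (exp (- q k - z k * phi) - 1)).

Definition constraint (N : nat) (z : nat -> R) (zA A : R) (c : nat -> R) (v : R) : Prop :=
  rsum N (fun k => z k * c k) + zA * A / v = 0.

Definition steady_state (N : nat) (z ce : nat -> R) (A zA : R)
    (L : nat -> nat -> R) (p : nat -> R) (c : nat -> R) (v phi : R) : Prop :=
  (forall k, (k < N)%nat -> 0 < c k) /\ 0 < v /\
  constraint N z zA A c v /\
  (forall k, (k < N)%nat ->
     rsum N (fun j => L k j * mu ce z c phi j) + p k = 0) /\
  piw N ce c A v = 0.

Definition in_Sbar (N : nat) (z : nat -> R) (zA A : R) (c : nat -> R) (v : R) : Prop :=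
  (forall k, (k < N)%nat -> 0 <= c k) /\ 0 < v /\ constraint N z zA A c v.

(* In the variables a = v c every summand a_k ln (a_k / (v c^e_k)) is a
   perspective of x ln x, hence jointly convex in (a_k, v), and the quadratic
   form of the Hessian is  sum_k a_k (h_k/a_k - h_v/v)^2 + A (h_v/v)^2.
   At a steady state (c', v', phi'), L (mu + q) = 0 forces
   ln (c'_k / c^e_k) = - q_k - z_k phi'; using electroneutrality on S-bar and
   pi_w = 0 this gives
     G(c, v) - G(c', v') = v sum_k KL(c_k, c'_k) + (A / v') KL(v', v),
   with KL(a, b) = a ln (a/b) - a + b >= 0, vanishing only for a = b. *)

From Stdlib Require Import Reals Lra Lia.
From Coquelicot Require Import Coquelicot.
Open Scope R_scope.
Set Bullet Behavior "Strict Subproofs".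

Lemma rsum_ext n f g : (forall k, (k < n)%nat -> f k = g k) -> rsum n f = rsum n g.
Proof.
  induction n as [|n IH]; intros Hfg; simpl; [reflexivity|].
  rewrite IH by (intros; apply Hfg; lia). rewrite Hfg by lia. reflexivity.
Qed.

Lemma rsum_S n f : rsum (S n) f = rsum n f + f n.
Proof. reflexivity. Qed.

Lemma rsum_plus n f g : rsum n (fun k => f k + g k) = rsum n f + rsum n g.
Proof. induction n; simpl; [ring | rewrite IHn; ring]. Qed.

Lemma rsum_minus n f g : rsum n (fun k => f k - g k) = rsum n f - rsum n g.
Proof. induction n; simpl; [ring | rewrite IHn; ring]. Qed.

Lemma rsum_scal n c f : rsum n (fun k => c * f k) = c * rsum n f.
Proof. induction n; simpl; [ring | rewrite IHn; ring]. Qed.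

Lemma rsum_comb n a b f g :
  rsum n (fun k => a * f k + b * g k) = a * rsum n f + b * rsum n g.
Proof. rewrite rsum_plus, !rsum_scal. reflexivity. Qed.

Lemma rsum_0 n : rsum n (fun _ => 0) = 0.
Proof. induction n; simpl; [ring | rewrite IHn; ring]. Qed.

Lemma rsum_nonneg n f : (forall k, (k < n)%nat -> 0 <= f k) -> 0 <= rsum n f.
Proof.
  induction n as [|n IH]; intros Hf; simpl; [lra|].
  assert (0 <= rsum n f) by (apply IH; intros; apply Hf; lia).
  assert (0 <= f n) by (apply Hf; lia). lra.
Qed.

Lemma rsum_le n f g : (forall k, (k < n)%nat -> f k <= g k) -> rsum n f <= rsum n g.
Proof.
  intros Hfg. assert (0 <= rsum n (fun k => g k - f k)).
  { apply rsum_nonneg; intros k Hk; specialize (Hfg k Hk); lra. }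
  rewrite rsum_minus in H. lra.
Qed.

Lemma rsum_eq0_nonneg n f : (forall k, (k < n)%nat -> 0 <= f k) -> rsum n f = 0 ->
  forall k, (k < n)%nat -> f k = 0.
Proof.
  induction n as [|n IH]; intros Hf Hs k Hk; simpl in Hs; [lia|].
  assert (0 <= rsum n f) by (apply rsum_nonneg; intros; apply Hf; lia).
  assert (0 <= f n) by (apply Hf; lia).
  destruct (Nat.eq_dec k n) as [->|Hkn]; [lra|].
  apply IH; [intros; apply Hf; lia | lra | lia].
Qed.

Lemma unitv_eq i : unitv i i = 1.
Proof. unfold unitv; destruct (Nat.eq_dec i i); congruence. Qed.

Lemma unitv_ne i k : k <> i -> unitv i k = 0.
Proof. unfold unitv; destruct (Nat.eq_dec k i); congruence. Qed.

Lemma rsum_unitv n i g : (i < n)%nat -> rsum n (fun k => unitv i k * g k) = g i.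
Proof.
  induction n as [|n IH]; intros Hi; simpl; [lia|].
  destruct (Nat.eq_dec n i) as [<-|Hni].
  - rewrite (rsum_ext n _ (fun _ => 0)), rsum_0, unitv_eq; [ring|].
    intros k Hk; rewrite unitv_ne by lia; ring.
  - rewrite IH, unitv_ne by lia; ring.
Qed.

(** * Entropy inequalities *)

Lemma ln_le_sub1 x : 0 < x -> ln x <= x - 1.
Proof. intros Hx. pose proof (exp_ineq1_le (ln x)) as H. rewrite exp_ln in H; lra. Qed.

Lemma ln_eq_sub1 x : 0 < x -> ln x = x - 1 -> x = 1.
Proof.
  intros Hx E. destruct (Req_dec (ln x) 0) as [H0|H0].
  - rewrite <- (exp_ln x Hx), H0. apply exp_0.
  - pose proof (exp_ineq1 _ H0) as H. rewrite exp_ln in H; lra.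
Qed.

(* a ln r + a - b r is the tangent of the convex map a |-> a ln (a/b) at a = b r *)
Lemma xlnx_div_ge_tangent a b r : 0 <= a -> 0 < b -> 0 < r ->
  a * ln r + a - b * r <= a * ln (a / b).
Proof.
  intros Ha Hb Hr. destruct (Rle_lt_or_eq_dec 0 a Ha) as [Ha'|<-].
  - assert (E : ln (b * r / a) = ln r - ln (a / b)).
    { replace (b * r / a) with (r * / (a / b)) by (field; lra).
      rewrite ln_mult, ln_Rinv; try apply Rinv_0_lt_compat; try apply Rdiv_lt_0_compat; lra. }
    pose proof (ln_le_sub1 (b * r / a)) as Hl. rewrite E in Hl.
    assert (a * (ln r - ln (a / b)) <= a * (b * r / a - 1))
      by (apply Rmult_le_compat_l; [lra | apply Hl, Rdiv_lt_0_compat; nra]).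
    replace (a * (b * r / a - 1)) with (b * r - a) in H by (field; lra). lra.
  - nra.
Qed.

Lemma xlnx_div_convex a1 a2 b1 b2 t :
  0 <= a1 -> 0 <= a2 -> 0 < b1 -> 0 < b2 -> 0 <= t <= 1 ->
  (t * a1 + (1 - t) * a2) * ln ((t * a1 + (1 - t) * a2) / (t * b1 + (1 - t) * b2))
  <= t * (a1 * ln (a1 / b1)) + (1 - t) * (a2 * ln (a2 / b2)).
Proof.
  intros Ha1 Ha2 Hb1 Hb2 Ht.
  set (a := t * a1 + (1 - t) * a2). set (b := t * b1 + (1 - t) * b2).
  assert (Hb : 0 < b) by (unfold b; nra).
  assert (Hta1 : 0 <= t * a1) by nra. assert (Hta2 : 0 <= (1 - t) * a2) by nra.
  destruct (Rle_lt_or_eq_dec 0 a ltac:(unfold a; lra)) as [Ha|Ha].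
  - (* both tangents taken at the common ratio r = a / b *)
    assert (Hr : 0 < a / b) by (apply Rdiv_lt_0_compat; lra).
    pose proof (xlnx_div_ge_tangent a1 b1 (a / b) Ha1 Hb1 Hr) as T1.
    pose proof (xlnx_div_ge_tangent a2 b2 (a / b) Ha2 Hb2 Hr) as T2.
    apply (Rmult_le_compat_l t) in T1; [|lra].
    apply (Rmult_le_compat_l (1 - t)) in T2; [|lra].
    assert (E : t * (a1 * ln (a / b) + a1 - b1 * (a / b))
              + (1 - t) * (a2 * ln (a / b) + a2 - b2 * (a / b)) = a * ln (a / b))
      by (unfold a, b in *; field; lra).
    lra.
  - assert (E1 : t * a1 = 0) by (unfold a in Ha; lra).
    assert (E2 : (1 - t) * a2 = 0) by (unfold a in Ha; lra).
    rewrite <- Ha, <- !Rmult_assoc, E1, E2. lra.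
Qed.

Definition rel_entropy (a b : R) : R := a * ln (a / b) - a + b.

Lemma rel_entropy_ge0 a b : 0 <= a -> 0 < b -> 0 <= rel_entropy a b.
Proof.
  intros Ha Hb. pose proof (xlnx_div_ge_tangent a b 1 Ha Hb Rlt_0_1) as T.
  rewrite ln_1 in T. unfold rel_entropy. lra.
Qed.

Lemma rel_entropy_eq0 a b : 0 <= a -> 0 < b -> rel_entropy a b = 0 -> a = b.
Proof.
  unfold rel_entropy. intros Ha Hb E. destruct (Rle_lt_or_eq_dec 0 a Ha) as [Ha'|<-]; [|lra].
  assert (Hba : b / a = 1).
  { apply ln_eq_sub1; [apply Rdiv_lt_0_compat; lra|].
    replace (b / a) with (/ (a / b)) by (field; lra).
    rewrite ln_Rinv by (apply Rdiv_lt_0_compat; lra).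
    apply (Rmult_eq_reg_l a); [|lra]. replace (a * (/ (a / b) - 1)) with (b - a) by (field; lra).
    lra. }
  apply (Rmult_eq_reg_r (/ a)); [|apply Rinv_neq_0_compat; lra].
  rewrite Rinv_r by lra. exact (eq_sym Hba).
Qed.

Lemma rel_entropy_diag a : 0 < a -> rel_entropy a a = 0.
Proof. intros Ha. unfold rel_entropy, Rdiv. rewrite Rinv_r, ln_1 by lra. ring. Qed.

Lemma Gt_pt_convex N ce q A : 0 < A -> (forall k, (k < N)%nat -> 0 < ce k) ->
  convex_on_dom N (Gt_pt N ce q A).
Proof.
  intros HA Hce x y t [Hx HxN] [Hy HyN] Ht. unfold Gt_pt, Gt_av.
  set (V := t * x N + (1 - t) * y N).
  assert (Hterm : forall k, (k < N)%nat ->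
    (t * x k + (1 - t) * y k) * (ln ((t * x k + (1 - t) * y k) / (V * ce k)) - 1 + q k)
      + V * ce k
    <= t * (x k * (ln (x k / (x N * ce k)) - 1 + q k) + x N * ce k)
       + (1 - t) * (y k * (ln (y k / (y N * ce k)) - 1 + q k) + y N * ce k)).
  { intros k Hk. specialize (Hce k Hk).
    pose proof (xlnx_div_convex (x k) (y k) (x N * ce k) (y N * ce k) t) as C.
    replace (t * (x N * ce k) + (1 - t) * (y N * ce k)) with (V * ce k) in C by (unfold V; ring).
    assert (0 < x N * ce k) by nra. assert (0 < y N * ce k) by nra.
    specialize (C (Hx k Hk) (Hy k Hk) ltac:(lra) ltac:(lra) Ht). unfold V in *. lra. }
  pose proof (xlnx_div_convex A A (x N) (y N) t) as CA.
  replace (t * A + (1 - t) * A) with A in CA by ring.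
  specialize (CA ltac:(lra) ltac:(lra) HxN HyN Ht). fold V in CA.
  pose proof (rsum_le N _ _ Hterm) as Hsum.
  rewrite rsum_comb in Hsum. lra.
Qed.

(** * The Hessian *)

Definition Gt_grad (N : nat) (ce q : nat -> R) (A : R) (y : nat -> R) (j : nat) : R :=
  if Nat.eq_dec j N then rsum N (fun k => ce k - y k / y N) - A / y N
  else ln (y j / (y N * ce j)) + q j.

Definition Gt_hess (N : nat) (A : R) (x : nat -> R) (i j : nat) : R :=
  if Nat.eq_dec i N then
    if Nat.eq_dec j N then (rsum N x + A) / (x N * x N) else - / x N
  else if Nat.eq_dec j N then - / x N else unitv i j / x j.

Lemma derivable_pt_lim_rsum n F l x :
  (forall k, (k < n)%nat -> derivable_pt_lim (F k) x (l k)) ->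
  derivable_pt_lim (fun t => rsum n (fun k => F k t)) x (rsum n l).
Proof.
  induction n as [|n IH]; intros HF; simpl.
  - apply derivable_pt_lim_const.
  - apply (derivable_pt_lim_plus (fun t => rsum n (fun k => F k t)) (F n)).
    + apply IH; intros; apply HF; lia.
    + apply HF; lia.
Qed.

Lemma derivable_pt_lim_entropy_term a da v dv c s : 0 < a -> 0 < v -> 0 < c ->
  derivable_pt_lim
    (fun t => (a + t * da) * (ln ((a + t * da) / ((v + t * dv) * c)) - 1 + s) + (v + t * dv) * c)
    0 (da * (ln (a / (v * c)) + s) + dv * (c - a / v)).
Proof.
  intros Ha Hv Hc. apply is_derive_Reals. auto_derive; rewrite ?Rmult_0_l, ?Rplus_0_r.
  - repeat split; [nra | apply Rdiv_lt_0_compat; nra].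
  - unfold Rdiv. field. repeat split; lra.
Qed.

Lemma derivable_pt_lim_volume_term A v dv : 0 < A -> 0 < v ->
  derivable_pt_lim (fun t => A * (ln (A / (v + t * dv)) - 1)) 0 (- A * dv / v).
Proof.
  intros HA Hv. apply is_derive_Reals. auto_derive; rewrite ?Rmult_0_l, ?Rplus_0_r.
  - repeat split; [lra | apply Rmult_lt_0_compat; [lra | apply Rinv_0_lt_compat; lra]].
  - field. lra.
Qed.

Lemma derivable_pt_lim_ratio a da v dv : 0 < v ->
  derivable_pt_lim (fun t => (a + t * da) / (v + t * dv)) 0 ((da * v - a * dv) / (v * v)).
Proof.
  intros Hv. apply is_derive_Reals. auto_derive; rewrite ?Rmult_0_l, ?Rplus_0_r.
  - lra.
  - field. lra.
Qed.

Lemma derivable_pt_lim_inverse A v dv : 0 < v ->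
  derivable_pt_lim (fun t => A / (v + t * dv)) 0 (- A * dv / (v * v)).
Proof.
  intros Hv. apply is_derive_Reals. auto_derive; rewrite ?Rmult_0_l, ?Rplus_0_r.
  - lra.
  - field. lra.
Qed.

Lemma derivable_pt_lim_log_ratio a da v dv c s : 0 < a -> 0 < v -> 0 < c ->
  derivable_pt_lim (fun t => ln ((a + t * da) / ((v + t * dv) * c)) + s) 0 (da / a - dv / v).
Proof.
  intros Ha Hv Hc. apply is_derive_Reals. auto_derive; rewrite ?Rmult_0_l, ?Rplus_0_r.
  - repeat split; [nra | apply Rdiv_lt_0_compat; nra].
  - field. repeat split; lra.
Qed.

Lemma Gt_grad_spec N ce q A y j : 0 < A -> (forall k, (k < N)%nat -> 0 < ce k) ->
  in_open (S N) y -> (j < S N)%nat ->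
  derivable_pt_lim (fun t => Gt_pt N ce q A (shift y t j)) 0 (Gt_grad N ce q A y j).
Proof.
  intros HA Hce Hy Hj. assert (HyN : 0 < y N) by (apply Hy; lia).
  unfold Gt_pt, Gt_av, shift.
  replace (Gt_grad N ce q A y j) with
    (rsum N (fun k => unitv j k * (ln (y k / (y N * ce k)) + q k)
                      + unitv j N * (ce k - y k / y N))
     + - A * unitv j N / y N).
  { apply derivable_pt_lim_plus.
    - apply derivable_pt_lim_rsum. intros k Hk. apply derivable_pt_lim_entropy_term; [apply Hy; lia | lra | auto].
    - apply derivable_pt_lim_volume_term; auto. }
  unfold Gt_grad. destruct (Nat.eq_dec j N) as [->|HjN].
  - rewrite unitv_eq, (rsum_ext N _ (fun k => ce k - y k / y N)); [field; lra|].
    intros k Hk. rewrite unitv_ne by lia. ring.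
  - rewrite (unitv_ne j N), (rsum_ext N _ (fun k => unitv j k * (ln (y k / (y N * ce k)) + q k)))
      by (lia || (intros; ring)).
    rewrite rsum_unitv by lia. field. lra.
Qed.

Lemma Gt_hess_spec N ce q A x i j : (forall k, (k < N)%nat -> 0 < ce k) ->
  in_open (S N) x -> (i < S N)%nat -> (j < S N)%nat ->
  derivable_pt_lim (fun t => Gt_grad N ce q A (shift x t i) j) 0 (Gt_hess N A x i j).
Proof.
  intros Hce Hx Hi Hj. assert (HxN : 0 < x N) by (apply Hx; lia).
  unfold Gt_grad, shift. destruct (Nat.eq_dec j N) as [->|HjN].
  - replace (Gt_hess N A x i N) with
      (rsum N (fun k => 0 - (unitv i k * x N - x k * unitv i N) / (x N * x N))
       - - A * unitv i N / (x N * x N)).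
    { apply derivable_pt_lim_minus; [|apply derivable_pt_lim_inverse; lra].
      apply derivable_pt_lim_rsum. intros k Hk.
      apply derivable_pt_lim_minus; [apply derivable_pt_lim_const | apply derivable_pt_lim_ratio; lra]. }
    unfold Gt_hess. destruct (Nat.eq_dec N N) as [_|]; [|congruence].
    destruct (Nat.eq_dec i N) as [->|HiN].
    + rewrite unitv_eq, (rsum_ext N _ (fun k => / (x N * x N) * x k)), rsum_scal; [field; lra|].
      intros k Hk. rewrite unitv_ne by lia. field. lra.
    + rewrite (unitv_ne i N), (rsum_ext N _ (fun k => unitv i k * (- / x N))) by (lia || (intros; field; lra)).
      rewrite rsum_unitv by lia. field. lra.
  - replace (Gt_hess N A x i j) with (unitv i j / x j - unitv i N / x N).
    { apply derivable_pt_lim_log_ratio; [apply Hx | lra | apply Hce]; lia. }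
    assert (0 < x j) by (apply Hx; lia).
    unfold Gt_hess. destruct (Nat.eq_dec j N) as [|_]; [congruence|].
    destruct (Nat.eq_dec i N) as [->|HiN].
    + rewrite unitv_eq, unitv_ne by lia. field. lra.
    + rewrite (unitv_ne i N) by lia. field. lra.
Qed.

Lemma Gt_hess_quadratic_form N A x h : in_open (S N) x ->
  rsum (S N) (fun i => h i * rsum (S N) (fun j => Gt_hess N A x i j * h j))
  = rsum N (fun k => x k * (h k / x k - h N / x N) ^ 2) + A * (h N / x N) ^ 2.
Proof.
  intros Hx. assert (HxN : 0 < x N) by (apply Hx; lia).
  assert (Hxk : forall k, (k < N)%nat -> x k <> 0) by (intros k Hk; specialize (Hx k ltac:(lia)); lra).
  set (r := h N / x N).
  assert (Hrow : forall i, (i < N)%nat ->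
            rsum (S N) (fun j => Gt_hess N A x i j * h j) = h i / x i - r).
  { intros i Hi. rewrite rsum_S. unfold Gt_hess at 2.
    destruct (Nat.eq_dec i N) as [|_]; [lia|]. destruct (Nat.eq_dec N N) as [_|]; [|congruence].
    rewrite (rsum_ext N _ (fun j => unitv i j * (h j / x j))).
    - rewrite rsum_unitv by lia. unfold r. field. split; [lra | auto].
    - intros j Hj. unfold Gt_hess. destruct (Nat.eq_dec i N) as [|_]; [lia|].
      destruct (Nat.eq_dec j N) as [|_]; [lia|]. field. auto. }
  assert (HrowN : rsum (S N) (fun j => Gt_hess N A x N j * h j)
                  = - / x N * rsum N h + (rsum N x + A) * r / x N).
  { rewrite rsum_S, <- rsum_scal. unfold Gt_hess at 2.
    destruct (Nat.eq_dec N N) as [_|]; [|congruence].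
    rewrite (rsum_ext N _ (fun j => - / x N * h j)).
    - unfold r. field. lra.
    - intros j Hj. unfold Gt_hess. destruct (Nat.eq_dec N N) as [_|]; [|congruence].
      destruct (Nat.eq_dec j N) as [|_]; [lia | reflexivity]. }
  rewrite rsum_S, HrowN, (rsum_ext N _ (fun i => h i * (h i / x i - r))) by (intros; rewrite Hrow; auto).
  rewrite (rsum_ext N (fun k => x k * (h k / x k - r) ^ 2)
             (fun k => h k * (h k / x k - r) + - r * h k + (r * r) * x k)).
  - rewrite !rsum_plus, !rsum_scal. unfold r. field. lra.
  - intros k Hk. field. auto.
Qed.

Lemma Gt_hess_pos_def N A x : 0 < A -> in_open (S N) x -> pos_def (S N) (Gt_hess N A x).
Proof.
  intros HA Hx h [k [Hk Hhk]]. rewrite Gt_hess_quadratic_form by auto.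
  assert (HxN : 0 < x N) by (apply Hx; lia).
  set (r := h N / x N).
  assert (Hterm : forall k, (k < N)%nat -> 0 <= x k * (h k / x k - r) ^ 2).
  { intros i Hi. apply Rmult_le_pos; [apply Rlt_le, Hx; lia | apply pow2_ge_0]. }
  assert (Hsum : 0 <= rsum N (fun k => x k * (h k / x k - r) ^ 2)) by (apply rsum_nonneg; auto).
  destruct (Req_dec r 0) as [Hr|Hr].
  - (* then h N = 0, so the nonzero coordinate lies among the first N *)
    assert (HkN : (k < N)%nat).
    { destruct (Nat.eq_dec k N) as [->|]; [|lia].
      exfalso. apply Hhk. unfold r in Hr. apply (Rmult_eq_reg_r (/ x N)); [lra|].
      apply Rinv_neq_0_compat; lra. }
    assert (Hxk : 0 < x k) by (apply Hx; lia).
    assert (Hhx : h k / x k <> 0).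
    { unfold Rdiv. apply Rmult_integral_contrapositive. split; [auto | apply Rinv_neq_0_compat; lra]. }
    assert (rsum N (fun k => x k * (h k / x k - r) ^ 2) <> 0).
    { intros E. pose proof (rsum_eq0_nonneg N _ Hterm E k HkN) as Ek.
      rewrite Hr, Rminus_0_r in Ek. apply Rmult_integral in Ek as [|Ek]; [lra|].
      exact (pow_nonzero _ 2 Hhx Ek). }
    assert (A * r ^ 2 = 0) by (rewrite Hr; ring). lra.
  - pose proof (pow_nonzero r 2 Hr). pose proof (pow2_ge_0 r). nra.
Qed.

(** * The steady state as minimizer *)

Lemma pos_def_kernel n M h : pos_def n M ->
  (forall i, (i < n)%nat -> rsum n (fun j => M i j * h j) = 0) ->
  forall k, (k < n)%nat -> h k = 0.
Proof.
  intros HM Hker k Hk. destruct (Req_dec (h k) 0) as [|Hhk]; [assumption|].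
  exfalso. specialize (HM h (ex_intro _ k (conj Hk Hhk))).
  rewrite (rsum_ext n _ (fun _ => 0)), rsum_0 in HM; [lra|].
  intros i Hi. rewrite Hker by auto. ring.
Qed.

Section SteadyState.

Variables (N : nat) (z ce q p : nat -> R) (L : nat -> nat -> R) (A zA : R).
Variables (cs : nat -> R) (vs phis : R).
Hypothesis HA : 0 < A.
Hypothesis Hce : forall k, (k < N)%nat -> 0 < ce k.
Hypothesis Lpd : pos_def N L.
Hypothesis Hq : forall k, (k < N)%nat -> rsum N (fun j => L k j * q j) = p k.
Hypothesis Hss : steady_state N z ce A zA L p cs vs phis.

Lemma steady_state_in_Sbar : in_Sbar N z zA A cs vs.
Proof.
  destruct Hss as (Hcs & Hvs & Hcon & _).
  split; [intros k Hk; apply Rlt_le, Hcs; auto | auto].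
Qed.

Lemma steady_state_ln_conc k : (k < N)%nat -> ln (cs k / ce k) = - q k - z k * phis.
Proof.
  destruct Hss as (_ & _ & _ & Hflux & _). intros Hk.
  enough (mu ce z cs phis k + q k = 0) by (unfold mu in *; lra).
  apply (pos_def_kernel N L (fun j => mu ce z cs phis j + q j)); auto.
  intros i Hi.
  rewrite (rsum_ext N _ (fun j => L i j * mu ce z cs phis j + L i j * q j)) by (intros; ring).
  rewrite rsum_plus, Hq by auto. specialize (Hflux i Hi). lra.
Qed.

Lemma Gt_cv_steady_form c v : in_Sbar N z zA A c v ->
  Gt_cv N ce q A c v = v * rsum N (fun k => rel_entropy (c k) (cs k))
                       + phis * zA * A + v * A / vs + A * (ln (A / v) - 1).
Proof.
  destruct Hss as (Hcs & Hvs & _ & _ & Hpiw). unfold piw in Hpiw.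
  intros (Hc & Hv & Hcon). unfold constraint in Hcon. unfold Gt_cv.
  rewrite (rsum_ext N _ (fun k => rel_entropy (c k) (cs k) - phis * (z k * c k) + (ce k - cs k))).
  - rewrite rsum_plus, rsum_minus, rsum_scal, rsum_minus.
    replace (rsum N (fun k => z k * c k)) with (- (zA * A / v)) by lra.
    replace (rsum N ce) with (rsum N cs + A / vs) by lra.
    field. lra.
  - intros k Hk. specialize (Hc k Hk). specialize (Hcs k Hk). specialize (Hce k Hk).
    unfold rel_entropy. destruct (Rle_lt_or_eq_dec 0 (c k) Hc) as [Hck|<-]; [|ring].
    replace (c k / ce k) with ((c k / cs k) * (cs k / ce k)) by (field; lra).
    rewrite ln_mult, steady_state_ln_conc by (auto; apply Rdiv_lt_0_compat; lra). ring.
Qed.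

Lemma Gt_cv_sub_steady c v : in_Sbar N z zA A c v ->
  Gt_cv N ce q A c v - Gt_cv N ce q A cs vs
  = v * rsum N (fun k => rel_entropy (c k) (cs k)) + A / vs * rel_entropy vs v.
Proof.
  intros Hcv. pose proof Hcv as (_ & Hv & _).
  destruct Hss as (Hcs & Hvs & _).
  rewrite !Gt_cv_steady_form by (auto using steady_state_in_Sbar).
  rewrite (rsum_ext N (fun k => rel_entropy (cs k) (cs k)) (fun _ => 0)), rsum_0
    by (intros; apply rel_entropy_diag, Hcs; auto).
  unfold rel_entropy.
  replace (A / v) with ((A / vs) * (vs / v)) by (field; lra).
  rewrite ln_mult by (apply Rdiv_lt_0_compat; lra).
  field. lra.
Qed.

Lemma Gt_cv_excess_nonneg c v : in_Sbar N z zA A c v ->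
  0 <= v * rsum N (fun k => rel_entropy (c k) (cs k)) /\ 0 <= A / vs * rel_entropy vs v.
Proof.
  intros (Hc & Hv & _). destruct Hss as (Hcs & Hvs & _).
  split; apply Rmult_le_pos.
  - lra.
  - apply rsum_nonneg. intros k Hk. apply rel_entropy_ge0; auto.
  - apply Rlt_le, Rdiv_lt_0_compat; lra.
  - apply rel_entropy_ge0; lra.
Qed.

Lemma steady_state_minimizes c v : in_Sbar N z zA A c v ->
  Gt_cv N ce q A cs vs <= Gt_cv N ce q A c v.
Proof.
  intros Hcv. pose proof (Gt_cv_sub_steady c v Hcv).
  pose proof (Gt_cv_excess_nonneg c v Hcv). lra.
Qed.

Lemma steady_state_unique_minimizer c v : in_Sbar N z zA A c v ->
  Gt_cv N ce q A c v <= Gt_cv N ce q A cs vs ->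
  (forall k, (k < N)%nat -> c k = cs k) /\ v = vs.
Proof.
  intros Hcv Hle. pose proof (Gt_cv_sub_steady c v Hcv) as E.
  destruct (Gt_cv_excess_nonneg c v Hcv) as [H1 H2].
  destruct Hcv as (Hc & Hv & _). destruct Hss as (Hcs & Hvs & _).
  assert (Hconc : v * rsum N (fun k => rel_entropy (c k) (cs k)) = 0) by lra.
  assert (Hvol : A / vs * rel_entropy vs v = 0) by lra.
  split.
  - apply Rmult_integral in Hconc as [|Hconc]; [lra|].
    intros k Hk. apply rel_entropy_eq0; auto.
    apply (rsum_eq0_nonneg N (fun k => rel_entropy (c k) (cs k))); auto.
    intros j Hj. apply rel_entropy_ge0; auto.
  - apply Rmult_integral in Hvol as [Hvol|Hvol].
    + assert (0 < A / vs) by (apply Rdiv_lt_0_compat; lra). lra.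
    + symmetry. apply rel_entropy_eq0; lra.
Qed.

End SteadyState.

Theorem lemma4
  (N : nat) (HN : (2 <= N)%nat)
  (z : nat -> R) (Hz : exists k, (k < N)%nat /\ z k <> 0)
  (ce : nat -> R) (Hce : forall k, (k < N)%nat -> 0 < ce k)
  (Hneutral : rsum N (fun k => z k * ce k) = 0)
  (A : R) (HA : 0 < A) (zA : R)
  (L : nat -> nat -> R)
  (Lsym : forall i j, (i < N)%nat -> (j < N)%nat -> L i j = L j i)
  (Lpd : pos_def N L)
  (p : nat -> R) (zeta : R) (Hzeta : 0 < zeta)
  (q : nat -> R)
  (Hq : forall k, (k < N)%nat -> rsum N (fun j => L k j * q j) = p k) :
  ((forall x, in_open (S N) x ->
      exists H, is_hessian (S N) (Gt_pt N ce q A) x H /\ pos_def (S N) H) /\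
   convex_on_dom N (Gt_pt N ce q A)) /\
  (forall phimin : R,
     (forall phi, fphi N ce z q phimin <= fphi N ce z q phi) ->
     fphi N ce z q phimin < 0 ->
     forall (cs : nat -> R) (vs phis : R),
       steady_state N z ce A zA L p cs vs phis ->
       in_Sbar N z zA A cs vs /\
       (forall c v, in_Sbar N z zA A c v -> Gt_cv N ce q A cs vs <= Gt_cv N ce q A c v) /\
       (forall c v, in_Sbar N z zA A c v -> Gt_cv N ce q A c v <= Gt_cv N ce q A cs vs ->
          (forall k, (k < N)%nat -> c k = cs k) /\ v = vs)).
Proof.
  split; [split|].
  - intros x Hx. exists (Gt_hess N A x). split.
    + exists (Gt_grad N ce q A). split.
      * intros y Hy j Hj. apply Gt_grad_spec; auto.
      * intros i j Hi Hj. apply Gt_hess_spec; auto.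
    + apply Gt_hess_pos_def; auto.
  - apply Gt_pt_convex; auto.
  - (* the steady state is given *)
    intros phimin _ _ cs vs phis Hss. split; [|split].
    + eapply steady_state_in_Sbar; eauto.
    + intros c v. eapply steady_state_minimizes; eauto.
    + intros c v. eapply steady_state_unique_minimizer; eauto.
Qed.
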